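(* Let $\mathcal E$ be an exchangeability system for a noncommutative probability space $(\mathcal A,\phi)$, let $X_1,\dots,X_n\in\mathcal A$, and for $i=1,\dots,m$ let $Y_i=\sum_{j=1}^n\alpha_{ij}X_j+\beta_i1$ with $\alpha_{ij},\beta_i\in\mathbb C$. If $m\ge2$, then $$K_m(Y_1,\dots,Y_m)=\sum_{j_1,\dots,j_m=1}^n\alpha_{1,j_1}\cdots\alpha_{m,j_m}K_m(X_{j_1},\dots,X_{j_m});$$ in particular it does not depend on the $\beta_i$. Likewise, for every $\pi\in\Pi_m$ having no singleton block, $K_\pi(Y_1,\dots,Y_m)=\sum_{j_1,\dots,j_m}\alpha_{1,j_1}\cdots\alpha_{m,j_m}K_\pi(X_{j_1},\dots,X_{j_m})$.
   Context: A noncommutative probability space is a pair $(\mathcal A,\phi)$ of a complex unital algebra $\mathcal A$ and a unital linear functional $\phi$. An exchangeability system $\mathcal E$ for $(\mathcal A,\phi)$ consists of a noncommutative probability space $(\mathcal U,\tilde\phi)$ and a family $(\iota_k)_{k\in\mathbb N}$ of embeddings (injective unital algebra homomorphisms) $\iota_k:\mathcal A\to\mathcal A_k\subseteq\mathcal U$ with $\tilde\phi\circ\iota_k=\phi$; write $X^{(k)}=\iota_k(X)$. It is required that for all $X_1,\dots,X_n\in\mathcal A$, all indices $i_1,\dots,i_n\in\mathbb N$ and every bijection $\sigma$ of $\mathbb N$, $\tilde\phi(X_1^{(i_1)}\cdots X_n^{(i_n)})=\tilde\phi(X_1^{(\sigma(i_1))}\cdots X_n^{(\sigma(i_n))})$;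 this value depends only on the kernel of $j\mapsto i_j$ and for a partition $\sigma$ of $[n]$ is denoted $\phi_\sigma(X_1,\dots,X_n)$. For a primitive $m$-th root of unity $\omega$, $K_m(Y_1,\dots,Y_m)=\frac1m\tilde\phi(Y_1^\omega\cdots Y_m^\omega)$ with $Y^\omega=\sum_{k=1}^m\omega^kY^{(k)}$. $\Pi_m$ is the lattice of set partitions of $[m]$ under refinement with Möbius function $\mu$, and $K_\pi(Y_1,\dots,Y_m)=\sum_{\sigma\le\pi}\phi_\sigma(Y_1,\dots,Y_m)\mu(\sigma,\pi)$. *)

(* Scalars: the complex numbers, realized as R[i] for a
   realType R (mathcomp-real-closed's complex numbers over the reals). *)
From HB Require Import structures.
From mathcomp Require Import all_boot all_order all_algebra.
From mathcomp Require Import reals complex.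
Set Implicit Arguments. Unset Strict Implicit. Unset Printing Implicit Defensive.
Import Order.TTheory GRing.Theory Num.Theory.
Local Open Scope ring_scope.

Section NCProb.
Variable C : fieldType.

Definition nc_prob_space (A : algType C) (phi : A -> C) : Prop :=
  (forall (a : C) (x y : A), phi (a *: x + y) = a * phi x + phi y) /\ phi 1 = 1.

Definition alg_embedding (A U : algType C) (f : A -> U) : Prop :=
  [/\ forall (a : C) (x y : A), f (a *: x + y) = a *: f x + f y,
      forall x y : A, f (x * y) = f x * f y,
      f 1 = 1
    & injective f].

Definition mixed_moment (A U : algType C) (tphi : U -> C)
  (iota : nat -> A -> U) (n : nat) (X : 'I_n -> A) (i : 'I_n -> nat) : C :=
  tphi (\prod_(j < n) iota (i j) (X j)).

(* Exchangeability system (U, tphi, (iota_k)_k) for (A, phi); the index set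
   N is represented by nat. *)
Definition exchangeability_system (A : algType C) (phi : A -> C)
  (U : algType C) (tphi : U -> C) (iota : nat -> A -> U) : Prop :=
  [/\ nc_prob_space tphi,
      forall k, alg_embedding (iota k),
      forall k (x : A), tphi (iota k x) = phi x
    & forall (n : nat) (X : 'I_n -> A) (i : 'I_n -> nat) (s : nat -> nat),
        bijective s ->
        mixed_moment tphi iota X i = mixed_moment tphi iota X (s \o i)].

Definition is_setpart (m : nat) (P : {set {set 'I_m}}) : bool :=
  partition P [set: 'I_m].

Definition refines (m : nat) (s p : {set {set 'I_m}}) : bool :=
  [forall B in s, [exists B' in p, B \subset B']].

Definition setpart (m : nat) := {P : {set {set 'I_m}} | is_setpart P}.

Definition zeta_mx (m : nat) : 'M[C]_#|{: setpart m}| :=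
  \matrix_(i, j) (refines (val (enum_val i)) (val (enum_val j)))%:R.

(* Moebius function of Pi_m: the inverse of zeta in the incidence algebra. *)
Definition moebius (m : nat) (s p : setpart m) : C :=
  invmx (zeta_mx m) (enum_rank s) (enum_rank p).

(* phi_sigma(X_1,...,X_n): the mixed moment with any index function of
   kernel sigma; we choose the one numbering the blocks of sigma. *)
Definition block_index (m : nat) (s : {set {set 'I_m}}) (j : 'I_m) : nat :=
  index (pblock s j) (enum s).

Definition phi_part (A U : algType C) (tphi : U -> C) (iota : nat -> A -> U)
  (m : nat) (s : {set {set 'I_m}}) (Y : 'I_m -> A) : C :=
  mixed_moment tphi iota Y (block_index s).

Definition omega_lift (A U : algType C) (iota : nat -> A -> U)
  (m : nat) (w : C) (Y : A) : U :=
  \sum_(1 <= k < m.+1) w ^+ k *: iota k Y.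

Definition K_omega (A U : algType C) (tphi : U -> C) (iota : nat -> A -> U)
  (m : nat) (w : C) (Y : 'I_m -> A) : C :=
  m%:R^-1 * tphi (\prod_(j < m) omega_lift iota m w (Y j)).

Definition K_part (A U : algType C) (tphi : U -> C) (iota : nat -> A -> U)
  (m : nat) (p : setpart m) (Y : 'I_m -> A) : C :=
  \sum_(s : setpart m | refines (val s) (val p))
     phi_part tphi iota (val s) Y * moebius s p.

End NCProb.

From HB Require Import structures.
From mathcomp Require Import all_boot all_order all_algebra.
From mathcomp Require Import reals complex.
From Stdlib Require Import FunctionalExtensionality.
Import Order.TTheory GRing.Theory Num.Theory.
Local Open Scope ring_scope.
Set Implicit Arguments. Unset Strict Implicit.

(** The cumulants [K_omega] and [K_part p] are multilinear, because [tphi] and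
   every [iota k] are linear.  Expanding each [Y i = sum_j alpha i j *: X j +
   beta i *: 1] multilinearly, every term in which some argument equals [1]
   vanishes.  For [K_omega] this is because [omega_lift 1 = (sum_k w ^+ k) *: 1
   = 0].  For [K_part p], since [iota k 1 = 1], the moment [phi_sigma] does not
   see the block of the position [i0] holding [1]; by exchangeability it equals
   [phi_sigma'], where [sigma'] detaches [i0] as a singleton.  Writing
   [f = g * zeta] with [g = f * mu], this gives that [g] sums to zero over the
   partitions below [sigma] in which [i0] is not a singleton, and induction
   along refinement yields [g p = 0] when [i0] is not a singleton of [p]. *)

Section SetPartitions.
Variable m : nat.
Implicit Types P Q S : {set {set 'I_m}}.

Lemma setpart_cover P : is_setpart P -> cover P = [set: 'I_m].
Proof. by case/and3P=> /eqP. Qed.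

Lemma setpart_pblock_mem P x : is_setpart P -> pblock P x \in P.
Proof. by move=> hP; apply: pblock_mem; rewrite setpart_cover. Qed.

Lemma setpart_mem_pblock P x : is_setpart P -> x \in pblock P x.
Proof. by move=> hP; rewrite mem_pblock setpart_cover. Qed.

Lemma setpart_same_pblock P x y :
  is_setpart P -> y \in pblock P x -> pblock P y = pblock P x.
Proof. by case/and3P=> _ tP _; apply: same_pblock. Qed.

Lemma setpart_eq_pblock P x y :
  is_setpart P -> (pblock P x == pblock P y) = (y \in pblock P x).
Proof. by move=> hP; apply: eq_pblock; [case/and3P: hP | rewrite setpart_cover]. Qed.

Lemma setpart_blockP P B : is_setpart P -> B \in P -> exists x, B = pblock P x.
Proof.
case/and3P=> _ tP P0 BP; have /set0Pn[x xB] : B != set0 by apply: contraNneq P0 => <-.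
by exists x; rewrite (def_pblock tP BP xB).
Qed.

Lemma setpart_pblock_ext P Q : is_setpart P -> is_setpart Q ->
  pblock P =1 pblock Q -> P = Q.
Proof.
move=> hP hQ eqPQ; apply/setP => B; apply/idP/idP => BP.
  by have [x ->] := setpart_blockP hP BP; rewrite eqPQ setpart_pblock_mem.
by have [x ->] := setpart_blockP hQ BP; rewrite -eqPQ setpart_pblock_mem.
Qed.

Lemma refinesP P Q : is_setpart P -> is_setpart Q ->
  reflect (forall x, pblock P x \subset pblock Q x) (refines P Q).
Proof.
move=> hP hQ; apply: (iffP forall_inP) => [PQ x | PQ B BP].
  have /exists_inP[B BQ xB] := PQ _ (setpart_pblock_mem x hP).
  have /and3P[_ tQ _] := hQ.
  by rewrite (def_pblock tQ BQ (subsetP xB _ (setpart_mem_pblock x hP))).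
have [x ->] := setpart_blockP hP BP.
by apply/exists_inP; exists (pblock Q x); rewrite ?setpart_pblock_mem.
Qed.

Lemma refines_refl P : is_setpart P -> refines P P.
Proof. by move=> hP; apply/refinesP. Qed.

Lemma refines_trans P Q S : is_setpart P -> is_setpart Q -> is_setpart S ->
  refines P Q -> refines Q S -> refines P S.
Proof.
move=> hP hQ hS /(refinesP hP hQ) PQ /(refinesP hQ hS) QS.
by apply/refinesP => // x; apply: subset_trans (PQ x) (QS x).
Qed.

Section BlockFunction.
Variable F : 'I_m -> {set 'I_m}.
Hypotheses (F_refl : forall x, x \in F x) (F_eq : forall x y, y \in F x -> F y = F x).

Lemma trivIset_blocks : trivIset [set F x | x : 'I_m].
Proof.
apply/trivIsetP => _ _ /imsetP[x _ ->] /imsetP[y _ ->] Fxy.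
rewrite -setI_eq0; apply: contraNT Fxy => /set0Pn[z /setIP[zx zy]].
by rewrite -(F_eq zx) -(F_eq zy).
Qed.

Lemma pblock_blocks x : pblock [set F x | x : 'I_m] x = F x.
Proof. by apply: def_pblock; [exact: trivIset_blocks | exact: imset_f |]. Qed.

Lemma blocks_setpart : is_setpart [set F x | x : 'I_m].
Proof.
apply/and3P; split; last 2 first.
- exact: trivIset_blocks.
- by apply/imsetP=> -[x _ /setP/(_ x)]; rewrite inE F_refl.
apply/eqP/setP => x; rewrite inE; apply/bigcupP.
by exists (F x); rewrite ?imset_f.
Qed.

End BlockFunction.

Lemma refines_pblock_card_lt P Q : is_setpart P -> is_setpart Q ->
  refines P Q -> P != Q ->
  (\sum_x #|pblock P x| < \sum_x #|pblock Q x|)%N.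
Proof.
move=> hP hQ /(refinesP hP hQ) PQ neqPQ.
have [le eq] := leqif_sum (fun x (_ : true) => subset_leqif_card (PQ x)).
rewrite ltn_neqAle le eq andbT; apply: contra neqPQ => /forall_inP QP.
by apply/eqP/setpart_pblock_ext => // x; apply/eqP; rewrite eqEsubset PQ QP.
Qed.

Lemma setpart_refines_ind (Pr : setpart m -> Prop) :
  (forall s, (forall r, refines (val r) (val s) -> r != s -> Pr r) -> Pr s) ->
  forall s, Pr s.
Proof.
move=> IHs s; have [k le_s] := ubnP (\sum_x #|pblock (val s) x|).
elim: k s le_s => // k IHk s; rewrite ltnS => le_s; apply: IHs => r rs neq_rs.
by apply/IHk/leq_trans/le_s/refines_pblock_card_lt; rewrite ?(valP r) ?(valP s).
Qed.

End SetPartitions.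

Section Moebius.
Variables (C : fieldType) (m : nat).
Implicit Types r s t p : setpart m.

Local Notation zeta := (zeta_mx C m).
Local Notation mu := (moebius C).

Lemma sum_enum_rank (F : 'I_#|{: setpart m}| -> C) :
  \sum_i F i = \sum_(s : setpart m) F (enum_rank s).
Proof.
rewrite (reindex enum_rank) //.
by exists enum_val => x _; rewrite ?enum_rankK ?enum_valK.
Qed.

Lemma zeta_mx_rank s p :
  zeta (enum_rank s) (enum_rank p) = (refines (val s) (val p))%:R.
Proof. by rewrite mxE !enum_rankK. Qed.

Lemma zeta_mx_unit : zeta \in unitmx.
Proof.
rewrite -row_free_unit; apply: inj_row_free => v v_zeta; apply/rowP => i.
rewrite -(enum_valK i) mxE; elim/setpart_refines_ind: (enum_val i) => s IHs.
have /esym := congr1 (fun M : 'rV[C]_#|{: setpart m}| => M 0 (enum_rank s)) v_zeta.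
rewrite !mxE sum_enum_rank (bigD1 s) //= zeta_mx_rank refines_refl ?(valP s) //.
rewrite mulr1 big1 ?addr0 // => r neq_rs; rewrite zeta_mx_rank.
have [rs | _] := boolP (refines (val r) (val s)); last by rewrite mulr0.
by rewrite IHs ?mul0r.
Qed.

Lemma moebius_zeta_sum t s :
  \sum_(r | refines (val r) (val s)) mu t r = (t == s)%:R.
Proof.
have := congr1 (fun M : 'M[C]_#|{: setpart m}| => M (enum_rank t) (enum_rank s))
  (mulVmx zeta_mx_unit).
rewrite !mxE sum_enum_rank (inj_eq enum_rank_inj) => <-.
rewrite big_mkcond; apply: eq_bigr => r _.
by rewrite zeta_mx_rank; case: (refines _ _); rewrite ?mulr1 ?mulr0.
Qed.

Lemma moebius_eq0 s p : ~~ refines (val s) (val p) -> mu s p = 0.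
Proof.
elim/setpart_refines_ind: p => p IHp nsp.
have := moebius_zeta_sum s p; rewrite (bigD1 p) ?refines_refl ?(valP p) //=.
rewrite big1 ?addr0 => [-> | r /andP[rp neq_rp]].
  by case: eqP nsp => [-> | //]; rewrite refines_refl ?(valP p).
apply: IHp => //; apply: contra nsp => sr.
by apply: refines_trans sr rp; rewrite ?(valP s) ?(valP r) ?(valP p).
Qed.

Section Inversion.
Variable f : setpart m -> C.
Let g p := \sum_(s | refines (val s) (val p)) f s * mu s p.

Lemma moebius_inversion s : f s = \sum_(r | refines (val r) (val s)) g r.
Proof.
have gE r : g r = \sum_t f t * mu t r.
  rewrite /g [RHS](bigID (fun t => refines (val t) (val r))) /=.
  rewrite [X in _ + X]big1 ?addr0 //.
  by move=> t /moebius_eq0 ->; rewrite mulr0.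
under eq_bigr do rewrite gE; rewrite exchange_big /=.
rewrite (bigD1 s) //= -mulr_sumr moebius_zeta_sum eqxx mulr1 big1 ?addr0 //.
by move=> t /negbTE neq_ts; rewrite -mulr_sumr moebius_zeta_sum neq_ts mulr0.
Qed.

Lemma moebius_transform_eq0 (N : pred (setpart m)) (d : setpart m -> setpart m) :
  (forall s r, refines (val r) (val (d s)) = refines (val r) (val s) && ~~ N r) ->
  (forall s, f (d s) = f s) ->
  forall p, N p -> g p = 0.
Proof.
move=> d_le fd; elim/setpart_refines_ind => p IHp Np.
have : \sum_(r | refines (val r) (val p) && N r) g r = 0.
  have := fd p; rewrite !moebius_inversion [RHS](bigID N) /= addrC.
  by rewrite (eq_bigl _ _ (d_le p)) -[LHS]addr0 => /addrI/esym.
rewrite (bigD1 p) /= ?refines_refl ?(valP p) ?Np // big1 ?addr0 //.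
by move=> r /andP[/andP[rp Nr] neq_rp]; apply: IHp.
Qed.

End Inversion.
End Moebius.

Section LinearFor.
Variables (R : pzRingType) (V : lmodType R) (W : zmodType).
Variables (s : GRing.Scale.law R W) (f : V -> W).
Hypothesis f_lin : linear_for s f.

Let f_linear : {linear V -> W | s} := HB.pack f (GRing.isLinear.Build R V W s f f_lin).

Lemma linear_for0 : f 0 = 0.
Proof. exact: (linear0 f_linear). Qed.

Lemma linear_for_sum (I : Type) (r : seq I) (P : pred I) (F : I -> V) :
  f (\sum_(i <- r | P i) F i) = \sum_(i <- r | P i) f (F i).
Proof. exact: (linear_sum f_linear). Qed.

Lemma linear_forZ a x : f (a *: x) = s a (f x).
Proof. exact: (linearZ_LR f_linear). Qed.

End LinearFor.

Definition swapn (a b x : nat) : nat := if x == a then b else if x == b then a else x.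

Lemma swapnK a b : involutive (swapn a b).
Proof.
rewrite /swapn => x; case: (eqVneq x a) => [-> | xa].
  by rewrite eqxx; case: eqVneq.
by case: (eqVneq x b) => [-> | xb]; rewrite ?eqxx // (negbTE xa) (negbTE xb).
Qed.

Section Exchangeability.
Variables (C : fieldType) (A U : algType C).
Variables (phi : A -> C) (tphi : U -> C) (iota : nat -> A -> U).
Hypothesis hE : exchangeability_system phi tphi iota.

Lemma tphi_scalar : scalar tphi.
Proof. by case: hE => -[]. Qed.

Lemma iota_linear k : linear (iota k).
Proof. by case: hE => _ /(_ k) []. Qed.

Lemma iota1 k : iota k 1 = 1.
Proof. by case: hE => _ /(_ k) []. Qed.

Lemma mixed_moment_swapn n (X : 'I_n -> A) (c : 'I_n -> nat) a b :
  mixed_moment tphi iota X (swapn a b \o c) = mixed_moment tphi iota X c.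
Proof. by case: hE => _ _ _ exch; rewrite -exch //; exact: inv_bij (swapnK a b). Qed.

Lemma mixed_moment_kernel n (X : 'I_n -> A) (c1 c2 : 'I_n -> nat) :
  (forall j k, (c1 j == c1 k) = (c2 j == c2 k)) ->
  mixed_moment tphi iota X c1 = mixed_moment tphi iota X c2.
Proof.
move=> c12; suff /(_ n (leqnn n)) [c [_ <- c_c2]] : forall k, (k <= n)%N ->
    exists c : 'I_n -> nat,
    [/\ forall j l, (c j == c l) = (c2 j == c2 l),
        mixed_moment tphi iota X c = mixed_moment tphi iota X c1 &
        forall j : 'I_n, (j < k)%N -> c j = c2 j].
  by rewrite /mixed_moment; under eq_bigr => j _ do rewrite (c_c2 j (ltn_ord j)).
elim=> [_ | k IHk le_kn]; first by exists c1.
have [c [cc2 <- c_c2]] := IHk (ltnW le_kn); pose j := Ordinal le_kn.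
exists (swapn (c j) (c2 j) \o c); split=> [a b | | l].
- by rewrite /= (inj_eq (inv_inj (swapnK _ _))).
- by rewrite mixed_moment_swapn.
- rewrite ltnS leq_eqVlt => /predU1P[lj | lk] /=.
    by rewrite (_ : l = j) ?/swapn ?eqxx //; apply: val_inj.
  by rewrite /swapn cc2 (c_c2 _ lk); case: eqP => // ->.
Qed.

End Exchangeability.

Section DetachSingleton.
Variables (m : nat) (i0 : 'I_m).
Implicit Types P : {set {set 'I_m}}.
Implicit Types r s : setpart m.

Definition detach_blocks P (x : 'I_m) : {set 'I_m} :=
  if x == i0 then [set i0] else pblock P x :\ i0.

Lemma mem_detach_blocks P (hP : is_setpart P) x : x \in detach_blocks P x.
Proof.
rewrite /detach_blocks; case: eqVneq => [-> | xi0]; first exact: set11.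
by rewrite !inE xi0 setpart_mem_pblock.
Qed.

Lemma detach_blocks_same P (hP : is_setpart P) x y :
  y \in detach_blocks P x -> detach_blocks P y = detach_blocks P x.
Proof.
rewrite /detach_blocks; case: eqVneq => [_ | xi0].
  by rewrite inE => /eqP ->; rewrite eqxx.
by rewrite !inE => /andP[/negbTE -> yx]; rewrite (setpart_same_pblock hP yx).
Qed.

Definition detach (s : setpart m) : setpart m :=
  exist (fun P => is_setpart P) _
    (blocks_setpart (mem_detach_blocks (valP s)) (detach_blocks_same (valP s))).

Lemma pblock_detach s : pblock (val (detach s)) =1 detach_blocks (val s).
Proof.
exact: pblock_blocks (mem_detach_blocks (valP s)) (detach_blocks_same (valP s)).
Qed.

Lemma refines_detach r s : refines (val r) (val (detach s)) =
  refines (val r) (val s) && (pblock (val r) i0 == [set i0]).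
Proof.
have [hr hs hd] := And3 (valP r) (valP s) (valP (detach s)).
apply/idP/andP => [/(refinesP hr hd) r_d | [/(refinesP hr hs) r_s /eqP r_i0]].
  split.
    apply/refinesP => // x; apply: subset_trans (r_d x) _.
    rewrite pblock_detach /detach_blocks.
    case: eqVneq => [-> | _]; last exact: subsetDl.
    by rewrite sub1set setpart_mem_pblock.
  have := r_d i0; rewrite pblock_detach /detach_blocks eqxx => r_i0.
  by rewrite eqEsubset r_i0 sub1set setpart_mem_pblock.
apply/refinesP => // x; rewrite pblock_detach /detach_blocks.
case: eqVneq => [-> | xi0]; first by rewrite r_i0.
apply/subsetP => y yx; rewrite !inE (subsetP (r_s x)) // andbT.
apply: contra_neq xi0 => yi0; move: yx; rewrite yi0 => i0x.
move: (setpart_mem_pblock x hr).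
by rewrite -(setpart_same_pblock hr i0x) r_i0 inE => /eqP.
Qed.

Lemma block_index_lt P j : is_setpart P -> (block_index P j < #|{: {set 'I_m}}|)%N.
Proof.
move=> hP; apply: leq_trans (max_card P).
by rewrite /block_index cardE index_mem mem_enum setpart_pblock_mem.
Qed.

Lemma eq_block_index P j k : is_setpart P ->
  (block_index P j == block_index P k) = (k \in pblock P j).
Proof.
move=> hP; rewrite /block_index -setpart_eq_pblock //; apply/eqP/eqP => [|-> //].
by move/(congr1 (nth set0 (enum P))); rewrite !nth_index ?mem_enum ?setpart_pblock_mem.
Qed.

(* [#|{: {set 'I_m}}|] exceeds every block index: [i0] gets a fresh label. *)
Definition detached_index P (j : 'I_m) : nat :=
  if j == i0 then #|{: {set 'I_m}}| else block_index P j.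

Lemma eq_detached_index s j k :
  (detached_index (val (detach s)) j == detached_index (val (detach s)) k) =
  (detached_index (val s) j == detached_index (val s) k).
Proof.
have [hs hd] := (valP s, valP (detach s)).
rewrite /detached_index.
case: (eqVneq j i0) => [_ | ji0]; case: (eqVneq k i0) => [_ | ki0] //.
- by rewrite !(gtn_eqF (block_index_lt _ _)).
- by rewrite ![_ == #|_|]eq_sym !(gtn_eqF (block_index_lt _ _)).
by rewrite !eq_block_index // pblock_detach /detach_blocks (negbTE ji0) !inE ki0.
Qed.

End DetachSingleton.

Lemma prim_root_sum_eq0 (R : idomainType) m (w : R) :
  (1 < m)%N -> m.-primitive_root w -> \sum_(i < m) w ^+ i = 0.
Proof.
move=> m_gt1 hw; have w_neq1 : w != 1.
  by rewrite -[w]expr1 -(prim_order_dvd hw) dvdn1 neq_ltn m_gt1 orbT.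
have /esym/eqP := subrX1 w m.
by rewrite (prim_expr_order hw) subrr mulf_eq0 subr_eq0 (negbTE w_neq1) => /eqP.
Qed.

Lemma prodr_seq_eq0 (R : pzSemiRingType) (I : eqType) (r : seq I) (F : I -> R) i0 :
  i0 \in r -> F i0 = 0 -> \prod_(i <- r) F i = 0.
Proof. by case/splitPr=> r1 r2 Fi0; rewrite big_cat big_cons /= Fi0 mul0r mulr0. Qed.

Section Multilinear.
Variables (R : pzRingType) (A : lalgType R) (m : nat).

Definition multilinear (Phi : ('I_m -> A) -> R) : Prop :=
  forall (I : finType) (c : 'I_m -> I -> R) (W : 'I_m -> I -> A),
    Phi (fun i => \sum_k c i k *: W i k) =
    \sum_(J : {ffun 'I_m -> I}) (\prod_i c i (J i)) * Phi (fun i => W i (J i)).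

Lemma multilinear_affine n (Phi : ('I_m -> A) -> R) (X : 'I_n -> A)
    (alpha : 'I_m -> 'I_n -> R) (beta : 'I_m -> R) :
  multilinear Phi -> (forall Z i0, Z i0 = 1 -> Phi Z = 0) ->
  Phi (fun i => \sum_j alpha i j *: X j + beta i *: 1) =
  \sum_(J : {ffun 'I_m -> 'I_n}) (\prod_i alpha i (J i)) * Phi (fun i => X (J i)).
Proof.
move=> Phi_lin Phi1.
pose c i (b : bool) := if b then 1 else beta i.
pose W i (b : bool) := if b then \sum_j alpha i j *: X j else 1.
have -> : (fun i => \sum_j alpha i j *: X j + beta i *: 1) =
          (fun i => \sum_b c i b *: W i b).
  by apply: functional_extensionality => i; rewrite big_bool /= scale1r.
rewrite Phi_lin (bigD1 [ffun=> true]) //= [X in _ + X]big1 => [|J J_true]; last first.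
  have [i0 Ji0] : exists i0, ~~ J i0.
    apply/existsP; apply: contraR J_true => /existsPn J1.
    by apply/eqP/ffunP => i; rewrite ffunE; apply/negbNE/J1.
  by rewrite (Phi1 _ i0) ?mulr0 // /W (negbTE Ji0).
rewrite addr0 big1 ?mul1r => [|i _]; last by rewrite ffunE.
have -> : (fun i => W i (([ffun=> true] : {ffun 'I_m -> bool}) i)) =
          (fun i => \sum_j alpha i j *: X j).
  by apply: functional_extensionality => i; rewrite ffunE.
exact: (Phi_lin _ alpha (fun _ j => X j)).
Qed.

End Multilinear.

Section Cumulants.
Variables (C : fieldType) (A U : algType C).
Variables (phi : A -> C) (tphi : U -> C) (iota : nat -> A -> U).
Hypothesis hE : exchangeability_system phi tphi iota.

Lemma tphi_prod_expand m (T : 'I_m -> A -> U) (I : finType)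
    (c : 'I_m -> I -> C) (W : 'I_m -> I -> A) :
  (forall j, linear (T j)) ->
  tphi (\prod_j T j (\sum_k c j k *: W j k)) =
  \sum_(J : {ffun 'I_m -> I}) (\prod_j c j (J j)) * tphi (\prod_j T j (W j (J j))).
Proof.
move=> T_lin; have tphi_lin := tphi_scalar hE.
under eq_bigr => j _ do rewrite (linear_for_sum (T_lin j)).
under eq_bigr => j _ do under eq_bigr => k _ do rewrite (linear_forZ (T_lin j)).
rewrite bigA_distr_bigA (linear_for_sum tphi_lin); apply: eq_bigr => J _.
by rewrite scaler_prod (linear_forZ tphi_lin).
Qed.

Lemma K_part_multilinear m (p : setpart m) : multilinear (K_part tphi iota p).
Proof.
move=> I c W; rewrite /K_part /phi_part /mixed_moment.
under eq_bigr do rewrite (tphi_prod_expand _ _ (fun j => iota_linear hE _)) mulr_suml.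
rewrite exchange_big /=; apply: eq_bigr => J _; rewrite mulr_sumr.
by apply: eq_bigr => s _; rewrite mulrA.
Qed.

Lemma omega_lift_linear m w : linear (omega_lift iota m w).
Proof.
move=> a x y; rewrite /omega_lift scaler_sumr -big_split /=; apply: eq_bigr => k _.
by rewrite (iota_linear hE) scalerDr !scalerA mulrC.
Qed.

Lemma K_omega_multilinear m w : multilinear (K_omega tphi iota (m := m) w).
Proof.
move=> I c W; rewrite /K_omega (tphi_prod_expand _ _ (fun j => omega_lift_linear m w)).
by rewrite mulr_sumr; apply: eq_bigr => J _; rewrite mulrCA.
Qed.

Lemma omega_lift1 m w : (1 < m)%N -> m.-primitive_root w -> omega_lift iota m w 1 = 0.
Proof.
move=> m_gt1 hw; rewrite /omega_lift; under eq_bigr do rewrite (iota1 hE).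
rewrite -scaler_suml big_add1 big_mkord /=.
by under eq_bigr do rewrite exprS; rewrite -mulr_sumr prim_root_sum_eq0 ?mulr0 ?scale0r.
Qed.

Lemma K_omega_unit_eq0 m w (Z : 'I_m -> A) i0 :
  (1 < m)%N -> m.-primitive_root w -> Z i0 = 1 -> K_omega tphi iota w Z = 0.
Proof.
move=> m_gt1 hw Z1; rewrite /K_omega (prodr_seq_eq0 (mem_index_enum i0)).
  by rewrite (linear_for0 (tphi_scalar hE)) mulr0.
by rewrite Z1 omega_lift1.
Qed.

Lemma mixed_moment_eq_off m (Z : 'I_m -> A) i0 (c c' : 'I_m -> nat) :
  Z i0 = 1 -> (forall j, j != i0 -> c j = c' j) ->
  mixed_moment tphi iota Z c = mixed_moment tphi iota Z c'.
Proof.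
move=> Z1 cc'; rewrite /mixed_moment; congr tphi; apply: eq_bigr => j _.
by case: (eqVneq j i0) => [-> | /cc' ->]; rewrite ?Z1 ?(iota1 hE).
Qed.

Lemma phi_part_detach m i0 (Z : 'I_m -> A) (s : setpart m) : Z i0 = 1 ->
  phi_part tphi iota (val (detach i0 s)) Z = phi_part tphi iota (val s) Z.
Proof.
move=> Z1; have detachedE P :
    phi_part tphi iota P Z = mixed_moment tphi iota Z (detached_index i0 P).
  by apply: mixed_moment_eq_off Z1 _ => j /negbTE ji0; rewrite /detached_index ji0.
rewrite !detachedE; apply: (mixed_moment_kernel hE) => j k.
exact: eq_detached_index.
Qed.

Lemma K_part_unit_eq0 m (p : setpart m) (Z : 'I_m -> A) i0 :
  Z i0 = 1 -> pblock (val p) i0 != [set i0] -> K_part tphi iota p Z = 0.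
Proof.
move=> Z1; apply: (moebius_transform_eq0 (N := fun s => pblock (val s) i0 != [set i0])
  (d := detach i0)) => [s r | s]; first by rewrite refines_detach negbK.
exact: phi_part_detach.
Qed.

End Cumulants.

Theorem proposition3p1 (R : realType) (A : algType R[i]) (phi : A -> R[i])
  (U : algType R[i]) (tphi : U -> R[i]) (iota : nat -> A -> U)
  (hA : nc_prob_space phi)
  (hE : exchangeability_system phi tphi iota)
  (n m : nat) (X : 'I_n -> A) (alpha : 'I_m -> 'I_n -> R[i]) (beta : 'I_m -> R[i])
  (w : R[i]) (hw : m.-primitive_root w) :
  let Y := fun i : 'I_m => \sum_(j < n) alpha i j *: X j + beta i *: (1 : A) in
  (2 <= m)%N ->
  K_omega tphi iota w Y =
    \sum_(J : {ffun 'I_m -> 'I_n})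
       (\prod_(i < m) alpha i (J i)) * K_omega tphi iota w (fun i => X (J i))
  /\
  (forall p : setpart m,
     (forall B, B \in val p -> #|B| != 1%N) ->
     K_part tphi iota p Y =
       \sum_(J : {ffun 'I_m -> 'I_n})
          (\prod_(i < m) alpha i (J i)) * K_part tphi iota p (fun i => X (J i))).
Proof.
move=> Y m_gt1; rewrite /Y; split.
  apply: multilinear_affine; first exact (K_omega_multilinear hE w).
  by move=> Z i0; apply (K_omega_unit_eq0 hE m_gt1 hw).
move=> p p_no_singleton; apply: multilinear_affine.
  exact (K_part_multilinear hE p).
move=> Z i0 Z1; apply (K_part_unit_eq0 hE Z1).
apply: contra_neq (p_no_singleton _ (setpart_pblock_mem i0 (valP p))) => ->.
exact: cards1.
Qed.
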